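(* Let $\mathcal{I}_1\sqcup\cdots\sqcup\mathcal{I}_K=[N]$ be a partition of the modes into nonempty cells, let $\sigma_n$ denote the index of the cell containing mode $n$, let $\tilde I_1,\dots,\tilde I_K$ be positive integers and $I_n=\tilde I_{\sigma_n}$. Let $\mathbf{A}_k\in\mathbb{R}^{\tilde I_k\times r}$ for $k\in[K]$. If $\mathcal{Y}\in\mathbb{R}^{I_1\times\cdots\times I_N}$ is symmetric with respect to the partition $\mathcal{I}_1\sqcup\cdots\sqcup\mathcal{I}_K$, then for every $k\in[K]$ and all $u,v\in\mathcal{I}_k$, $$\mathbf{Y}_{(u)}\Big(\textstyle\bigodot_{j\neq u}\mathbf{A}_{\sigma_j}\Big) = \mathbf{Y}_{(v)}\Big(\textstyle\bigodot_{j\neq v}\mathbf{A}_{\sigma_j}\Big),$$ where $\bigodot_{j\neq t}\mathbf{A}_{\sigma_j} = \mathbf{A}_{\sigma_N}\odot\cdots\odot\mathbf{A}_{\sigma_{t+1}}\odot\mathbf{A}_{\sigma_{t-1}}\odot\cdots\odot\mathbf{A}_{\sigma_1}$.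
   Context: A tensor $\mathcal{Y}\in\mathbb{R}^{I_1\times\cdots\times I_N}$ is symmetric with respect to the partition if $y_{(i_{\pi(1)},\dots,i_{\pi(N)})}=y_{(i_1,\dots,i_N)}$ for every index $(i_1,\dots,i_N)$ and every permutation $\pi$ of $[N]$ mapping each cell $\mathcal{I}_\ell$ to itself. $\odot$ is the Khatri–Rao product: $\mathbf{A}\odot\mathbf{B}$ has $j$-th column $\mathbf{A}_{:,j}\otimes\mathbf{B}_{:,j}$. The mode-$t$ matricization $\mathbf{Y}_{(t)}\in\mathbb{R}^{I_t\times\prod_{j\neq t}I_j}$ places $y_{i_1,\dots,i_N}$ in row $i_t$ and column $1+\sum_{k\neq t}(i_k-1)\prod_{m<k,\,m\neq t}I_m$. *)

From mathcomp Require Import all_boot all_order all_algebra all_fingroup.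
From mathcomp Require Export reals.
Set Implicit Arguments. Unset Strict Implicit. Unset Printing Implicit Defensive.
Import GRing.Theory Num.Theory.
Local Open Scope ring_scope.

(* Conventions: modes are 0-based ('I_N), cells are 0-based ('I_K), tensor
   indices are 0-based naturals.  The partition of the modes into K cells is
   given by sigma : 'I_N -> 'I_K (mode n lies in cell sigma n).             *)

Section Defs.
Variable R : nzRingType.

(* entry access of a matrix by a natural row index (0 outside the range) *)
Definition mxat m n (M : 'M[R]_(m, n)) (i : nat) (c : 'I_n) : R :=
  match insub i : option 'I_m with Some i' => M i' c | None => 0 end.

(* Khatri-Rao product: column j of (A ⊙ B) is A_{:,j} ⊗ B_{:,j};
   row (0-based) i corresponds to rows (i %/ m2) of A and (i %% m2) of B. *)
Definition khatri_rao m1 m2 r (A : 'M[R]_(m1, r)) (B : 'M[R]_(m2, r))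
  : 'M[R]_(m1 * m2, r) :=
  \matrix_(i, j) (mxat A (i %/ m2) j * mxat B (i %% m2) j).

Variables (N K r : nat) (sigma : 'I_N -> 'I_K) (It : 'I_K -> nat).
Variable A : forall k : 'I_K, 'M[R]_(It k, r).

(* I_n = It (sigma n), extended to nat indices (1 outside [0,N)) *)
Definition dimn (n : nat) : nat :=
  match insub n : option 'I_N with Some n' => It (sigma n') | None => 1%N end.

Definition Amat (n : nat) : 'M[R]_(dimn n, r) :=
  match insub n : option 'I_N as o
    return 'M[R]_(match o with Some n' => It (sigma n') | None => 1%N end, r)
  with Some n' => A (sigma n') | None => 0 end.

(* Pn t n = prod_{m < n, m <> t} I_m  (the stride of mode n in the
   mode-t matricization, and the number of rows of the partial KR product) *)
Fixpoint Pn (t n : nat) : nat :=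
  match n with
  | 0 => 1%N
  | n'.+1 => if n' == t then Pn t n' else (dimn n' * Pn t n')%N
  end.

(* krn t n = A_{sigma_n} ⊙ ... ⊙ A_{sigma_1} with mode t omitted
   (1-based in the paper; here modes n-1,...,0), the empty product being
   the 1 x r all-ones matrix (neutral for ⊙). *)
Fixpoint krn (t n : nat) : 'M[R]_(Pn t n, r) :=
  match n return 'M[R]_(Pn t n, r) with
  | 0 => const_mx 1
  | n'.+1 =>
    if n' == t as b
       return 'M[R]_(if b then Pn t n' else (dimn n' * Pn t n')%N, r)
    then krn t n'
    else khatri_rao (Amat n') (krn t n')
  end.

Definition kr_except (t : 'I_N) : 'M[R]_(Pn t N, r) := krn t N.

(* A tensor in R^{I_1 x ... x I_N}: a function on index tuples
   (only the values at valid indices i_n < I_n are ever used). *)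
Definition tensor := {ffun 'I_N -> nat} -> R.

Definition valid_index (i : {ffun 'I_N -> nat}) : Prop :=
  forall n : 'I_N, (i n < It (sigma n))%N.

Definition partition_symmetric (Y : tensor) : Prop :=
  forall p : {perm 'I_N}, (forall n, sigma (p n) = sigma n) ->
  forall i : {ffun 'I_N -> nat}, valid_index i ->
    Y [ffun n => i (p n)] = Y i.

(* mode-t matricization: y_i sits in row i_t and column
   sum_{k <> t} i_k * prod_{m < k, m <> t} I_m  (0-based version of the
   paper's formula); written via the inverse (mixed-radix decoding). *)
Definition matricize (Y : tensor) (t : 'I_N) : 'M[R]_(It (sigma t), Pn t N) :=
  \matrix_(a, col)
    Y [ffun k : 'I_N => if k == t then (a : nat)
                        else ((col %/ Pn t k) %% dimn k)%N].

End Defs.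

Lemma same_cell_dim N K (sigma : 'I_N -> 'I_K) (It : 'I_K -> nat)
  (k : 'I_K) (u v : 'I_N) :
  sigma u = k -> sigma v = k -> It (sigma u) = It (sigma v).
Proof. by move=> -> ->. Qed.

From Pilot Require Import Defs.
From mathcomp Require Import all_boot all_order all_algebra all_fingroup.
From mathcomp Require Import reals.
Set Implicit Arguments. Unset Strict Implicit. Unset Printing Implicit Defensive.
Import GRing.Theory.

(* The columns of the mode-t matricization and the rows of the Khatri-Rao
   product omitting mode t are both indexed by the mixed-radix encoding of
   the multi-index (i_k)_{k <> t}.  Hence entry (a, c) of
   Y_(t) (KR_{j <> t} A_{sigma_j}) is the sum, over all valid multi-indices i
   with i_t = a, of y_i prod_{k <> t} (A_{sigma_k})_{i_k, c}.  When u and v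
   lie in the same cell, the transposition (u v) preserves the partition, so
   it maps the index set for u onto the one for v and, Y being symmetric,
   matches the summands. *)

Section MixedRadix.
Variables (N K : nat) (sigma : 'I_N -> 'I_K) (It : 'I_K -> nat).
Hypothesis It_gt0 : forall k, (0 < It k)%N.
Local Notation dimn := (dimn sigma It).
Local Notation Pn := (Pn sigma It).

Lemma dimn_gt0 n : (0 < dimn n)%N.
Proof. by rewrite /Defs.dimn; case: insub. Qed.

Lemma dimnE (k : 'I_N) : dimn k = It (sigma k).
Proof. by rewrite /Defs.dimn valK. Qed.

Lemma Pn_gt0 t n : (0 < Pn t n)%N.
Proof. by elim: n => //= n IH; case: ifP => // _; rewrite muln_gt0 dimn_gt0. Qed.

Lemma Pn_skip t : Pn t t.+1 = Pn t t.
Proof. by rewrite /= eqxx. Qed.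

Lemma PnS t n : n != t -> Pn t n.+1 = (dimn n * Pn t n)%N.
Proof. by move=> /negbTE /= ->. Qed.

Lemma dvdn_Pn t m n : (m <= n)%N -> Pn t m %| Pn t n.
Proof.
elim: n => [|n IH]; first by rewrite leqn0 => /eqP ->.
rewrite leq_eqVlt ltnS => /predU1P [-> // | /IH dvd_mn] /=.
by case: ifP => // _; apply: dvdn_mull.
Qed.

Definition digit t k col := (col %/ Pn t k %% dimn k)%N.

Lemma digit_lt t k col : (digit t k col < dimn k)%N.
Proof. by rewrite ltn_pmod ?dimn_gt0. Qed.

Lemma digit_small t n col :
  (col < dimn n * Pn t n)%N -> digit t n col = (col %/ Pn t n)%N.
Proof. by move=> lt_col; rewrite /digit modn_small // ltn_divLR ?Pn_gt0. Qed.

Lemma digitD_mulPn t k n x m : (k < n)%N -> k != t ->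
  digit t k (x + m * Pn t n) = digit t k x.
Proof.
move=> lt_kn neq_kt; have /dvdnP [c ->] : Pn t k.+1 %| Pn t n by apply: dvdn_Pn.
by rewrite PnS // /digit !mulnA addnC divnMDl ?Pn_gt0 // modnMDl.
Qed.

Lemma digit_modPn t k n col : (k < n)%N -> k != t ->
  digit t k (col %% Pn t n) = digit t k col.
Proof.
by move=> lt_kn neq_kt; rewrite {2}(divn_eq col (Pn t n)) addnC digitD_mulPn.
Qed.

Definition undigits t n (g : nat -> nat) :=
  (\sum_(k < n | k != t :> nat) g k * Pn t k)%N.

Lemma undigitsS t n g : undigits t n.+1 g =
  (undigits t n g + (if n == t then 0 else g n * Pn t n))%N.
Proof. by rewrite /undigits big_mkcond big_ord_recr /= -big_mkcond; case: eqP. Qed.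

Section Digits.
Variables (t : nat) (g : nat -> nat).

Lemma undigits_lt n : (forall k, k < n -> k != t -> g k < dimn k)%N ->
  (undigits t n g < Pn t n)%N.
Proof.
elim: n => [|n IH] g_lt; first by rewrite /undigits big_ord0.
have {}IH : (undigits t n g < Pn t n)%N by apply: IH => k /ltnW; apply: g_lt.
rewrite undigitsS; case: eqP => [eq_nt | /eqP neq_nt].
  by subst n; rewrite addn0 Pn_skip.
rewrite PnS //; apply: leq_trans (_ : Pn t n + g n * Pn t n <= _)%N.
  by rewrite ltn_add2r.
by rewrite -mulSn leq_pmul2r ?Pn_gt0 //; apply: g_lt.
Qed.

Lemma digit_undigits n : (forall k, k < n -> k != t -> g k < dimn k)%N ->
  forall k, (k < n)%N -> k != t -> digit t k (undigits t n g) = g k.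
Proof.
elim: n => // n IH g_lt k.
have g_lt' j : (j < n)%N -> j != t -> (g j < dimn j)%N.
  by move=> /ltnW; apply: g_lt.
rewrite ltnS leq_eqVlt => /predU1P [-> neq_nt | lt_kn neq_kt].
  rewrite undigitsS (negbTE neq_nt) addnC /digit divnMDl ?Pn_gt0 //.
  by rewrite divn_small ?addn0 ?modn_small ?g_lt ?undigits_lt.
rewrite undigitsS; case: eqP => _; first by rewrite addn0 IH.
by rewrite digitD_mulPn // IH.
Qed.

End Digits.

Lemma undigitsK t n col : (col < Pn t n)%N -> undigits t n (digit t ^~ col) = col.
Proof.
elim: n col => [|n IH] col lt_col.
  by rewrite /undigits big_ord0; move: lt_col; case: col.
rewrite undigitsS; case: eqP => [eq_nt | /eqP neq_nt].
  by subst n; rewrite addn0 IH // -Pn_skip.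
rewrite PnS // in lt_col.
have -> : undigits t n (digit t ^~ col) = undigits t n (digit t ^~ (col %% Pn t n)).
  by apply: eq_bigr => k neq_kt; rewrite digit_modPn.
by rewrite IH ?ltn_pmod ?Pn_gt0 // digit_small // addnC -divn_eq.
Qed.

End MixedRadix.

Local Open Scope ring_scope.

Lemma mxatE (R : nzRingType) m n (M : 'M[R]_(m, n)) i c (lt_im : (i < m)%N) :
  mxat M i c = M (Ordinal lt_im) c.
Proof. by rewrite /mxat insubT. Qed.

Lemma mxat_ord (R : nzRingType) m n (M : 'M[R]_(m, n)) (i : 'I_m) c :
  mxat M i c = M i c.
Proof. by rewrite /mxat valK. Qed.

Section KhatriRao.
Variables (R : comNzRingType) (N K r : nat) (sigma : 'I_N -> 'I_K).
Variables (It : 'I_K -> nat) (A : forall k : 'I_K, 'M[R]_(It k, r)).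
Hypothesis It_gt0 : forall k, (0 < It k)%N.

Lemma mxat_Amat (k : 'I_N) i c :
  mxat (Amat sigma A k) i c = mxat (A (sigma k)) i c.
Proof. by rewrite /Amat /Defs.dimn; move: (valK k); case: insub => // k' [->]. Qed.

Lemma mxat_krn t n col c : (col < Pn sigma It t n)%N ->
  mxat (krn sigma A t n) col c =
  \prod_(k < n | k != t :> nat) mxat (Amat sigma A k) (digit sigma It t k col) c.
Proof.
elim: n col => [|n IH] col.
  by rewrite big_ord0 => lt_col; rewrite (mxatE _ _ lt_col) mxE.
rewrite big_mkcond big_ord_recr /= -big_mkcond /=.
case: eqP => [_ | /eqP neq_nt] lt_col; first by rewrite IH // mulr1.
rewrite (mxatE _ _ lt_col) mxE /= -digit_small //.
rewrite IH ?ltn_pmod ?Pn_gt0 // mulrC; congr (_ * _).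
by apply: eq_bigr => k neq_kt; rewrite digit_modPn.
Qed.

End KhatriRao.

Section Columns.
Variables (N K : nat) (sigma : 'I_N -> 'I_K) (It : 'I_K -> nat) (M : nat).
Hypothesis It_gt0 : forall k, (0 < It k)%N.
Hypothesis It_le : forall k, (It k <= M)%N.
Local Notation Pn := (Pn sigma It).
Local Notation digit := (digit sigma It).

(* Multi-indices are summed over the finite type {ffun 'I_N -> 'I_M.+1},
   where M bounds every dimension. *)
Definition idx_val (f : {ffun 'I_N -> 'I_M.+1}) : {ffun 'I_N -> nat} :=
  [ffun k => val (f k)].

Definition idx_of (i : {ffun 'I_N -> nat}) : {ffun 'I_N -> 'I_M.+1} :=
  [ffun k => inord (i k)].

Definition in_slice (t : 'I_N) (a : nat) (i : {ffun 'I_N -> nat}) : bool :=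
  [forall k, i k < It (sigma k)]%N && (i t == a).

Definition col_index (t : 'I_N) (a col : nat) : {ffun 'I_N -> nat} :=
  [ffun k => if k == t then a else digit t k col].

Definition extend0 (i : {ffun 'I_N -> nat}) (n : nat) : nat :=
  if insub n is Some k then i k else 0%N.

Definition col_of (t : 'I_N) (i : {ffun 'I_N -> nat}) : nat := undigits sigma It t N (extend0 i).

Lemma idx_val_inj : injective idx_val.
Proof.
move=> f g /ffunP eq_fg; apply/ffunP => k; apply: val_inj.
by have := eq_fg k; rewrite !ffunE.
Qed.

Lemma idx_ofK (i : {ffun 'I_N -> nat}) : (forall k, i k < It (sigma k))%N -> idx_val (idx_of i) = i.
Proof.
move=> lt_i; apply/ffunP => k; rewrite !ffunE /= inordK // ltnS.
exact: leq_trans (ltnW (lt_i k)) (It_le _).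
Qed.

Lemma in_slice_valid (t : 'I_N) a i : in_slice t a i -> valid_index sigma It i.
Proof. by case/andP => /forallP. Qed.

Lemma col_index_in_slice (t : 'I_N) a col :
  (a < It (sigma t))%N -> in_slice t a (col_index t a col).
Proof.
move=> lt_a; rewrite /in_slice ffunE !eqxx andbT; apply/forallP => k.
by rewrite ffunE; case: eqP => [-> // | _]; rewrite -(dimnE sigma) digit_lt.
Qed.

Lemma in_slice_digits (t : 'I_N) a i : in_slice t a i ->
  forall k, (k < N)%N -> k != t -> (extend0 i k < dimn sigma It k)%N.
Proof.
by move=> /in_slice_valid valid_i k lt_kN _; rewrite /extend0 /Defs.dimn insubT.
Qed.

Lemma col_of_index (t : 'I_N) a col : (col < Pn t N)%N -> col_of t (col_index t a col) = col.
Proof.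
move=> lt_col; rewrite -[RHS](undigitsK It_gt0 lt_col); apply: eq_bigr => k neq_kt.
by rewrite /extend0 valK ffunE ifN.
Qed.

Lemma col_of_lt (t : 'I_N) a i : in_slice t a i -> (col_of t i < Pn t N)%N.
Proof. by move=> /in_slice_digits; apply: undigits_lt. Qed.

Lemma col_indexK (t : 'I_N) a i : in_slice t a i -> col_index t a (col_of t i) = i.
Proof.
move=> slice_i; apply/ffunP => k; rewrite ffunE.
case: eqP => [-> | /eqP neq_kt]; first by case/andP: slice_i => _ /eqP.
rewrite digit_undigits //; last exact: in_slice_digits slice_i.
by rewrite /extend0 valK.
Qed.

Lemma sum_columns (V : nmodType) (t : 'I_N) a (F : {ffun 'I_N -> nat} -> V) :
  (a < It (sigma t))%N ->
  \sum_(col < Pn t N) F (col_index t a col) =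
  \sum_(f : {ffun 'I_N -> 'I_M.+1} | in_slice t a (idx_val f)) F (idx_val f).
Proof.
move=> lt_a; pose to_idx (col : 'I_(Pn t N)) := idx_of (col_index t a col).
have to_idxK col : idx_val (to_idx col) = col_index t a col.
  by apply: idx_ofK; apply: in_slice_valid (col_index_in_slice col lt_a).
rewrite [RHS](reindex to_idx); last first.
  exists (fun f => Ordinal (ltn_pmod (col_of t (idx_val f)) (Pn_gt0 sigma It_gt0 t N))).
    by move=> col _; apply: val_inj; rewrite /= to_idxK col_of_index // modn_small.
  move=> f; rewrite inE => slice_f; apply: idx_val_inj.
  by rewrite to_idxK /= modn_small ?col_indexK // (col_of_lt slice_f).
by apply: eq_big => [col | col _]; rewrite to_idxK // col_index_in_slice.
Qed.

Lemma in_slice_perm (p : {perm 'I_N}) t a (i : {ffun 'I_N -> nat}) : (forall n, sigma (p n) = sigma n) ->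
  in_slice t a [ffun k => i (p k)] = in_slice (p t) a i.
Proof.
move=> sigma_p; rewrite /in_slice ffunE; congr (_ && _).
apply/forallP/forallP => lt_i k; last by rewrite ffunE -sigma_p.
by have := lt_i (p^-1 k)%g; rewrite ffunE -sigma_p permKV.
Qed.

End Columns.

Section Symmetry.
Variables (R : comNzRingType) (N K r : nat) (sigma : 'I_N -> 'I_K).
Variables (It : 'I_K -> nat) (A : forall k : 'I_K, 'M[R]_(It k, r)) (M : nat).
Hypothesis It_gt0 : forall k, (0 < It k)%N.
Hypothesis It_le : forall k, (It k <= M)%N.
Variable Y : tensor R N.
Hypothesis Ysym : partition_symmetric sigma It Y.
Local Notation index := {ffun 'I_N -> 'I_M.+1}.

Definition slice_term t c (i : {ffun 'I_N -> nat}) : R :=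
  Y i * \prod_(k | k != t) mxat (A (sigma k)) (i k) c.

Lemma mulmx_kr_exceptE t (a : 'I_(It (sigma t))) c :
  (matricize sigma It Y t *m kr_except sigma A t) a c =
  \sum_(f : index | in_slice sigma It t a (idx_val f)) slice_term t c (idx_val f).
Proof.
rewrite -(sum_columns It_gt0 It_le) // mxE; apply: eq_bigr => col _.
rewrite mxE /slice_term; congr (_ * _).
have -> : kr_except sigma A t col c = mxat (krn sigma A t N) col c.
  by rewrite mxat_ord.
rewrite mxat_krn //; apply: eq_bigr => k neq_kt.
by rewrite mxat_Amat ffunE ifN.
Qed.

Lemma slice_term_perm (p : {perm 'I_N}) t c (i : {ffun 'I_N -> nat}) :
  (forall n, sigma (p n) = sigma n) -> valid_index sigma It i ->
  slice_term t c [ffun k => i (p k)] = slice_term (p t) c i.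
Proof.
move=> sigma_p valid_i; rewrite /slice_term (Ysym sigma_p valid_i); congr (_ * _).
rewrite [RHS](reindex_inj (@perm_inj _ p)).
apply: eq_big => [k | k _]; first by rewrite (inj_eq (@perm_inj _ p)).
by rewrite ffunE sigma_p.
Qed.

Lemma sum_slice_tperm u v a c : sigma u = sigma v ->
  \sum_(f : index | in_slice sigma It u a (idx_val f)) slice_term u c (idx_val f) =
  \sum_(f : index | in_slice sigma It v a (idx_val f)) slice_term v c (idx_val f).
Proof.
move=> eq_uv; pose p := tperm u v.
have sigma_p n : sigma (p n) = sigma n by rewrite /p; case: tpermP => // ->.
have p_v : p v = u by rewrite /p tpermR.
pose pf (f : index) : index := [ffun k => f (p k)].
have pfK : involutive pf by move=> f; apply/ffunP => k; rewrite !ffunE tpermK.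
have idx_val_pf f : idx_val (pf f) = [ffun k => idx_val f (p k)].
  by apply/ffunP => k; rewrite !ffunE.
rewrite [RHS](reindex_inj (inv_inj pfK)).
apply: eq_big => [f | f slice_f]; rewrite idx_val_pf.
  by rewrite (in_slice_perm It _ _ _ sigma_p) p_v.
by rewrite slice_term_perm ?p_v //; apply: in_slice_valid slice_f.
Qed.

End Symmetry.

Theorem proposition2 (R : realType) (N K r : nat)
  (sigma : 'I_N -> 'I_K)
  (cells_nonempty : forall k : 'I_K, exists n : 'I_N, sigma n = k)
  (It : 'I_K -> nat) (It_pos : forall k : 'I_K, (0 < It k)%N)
  (A : forall k : 'I_K, 'M[R]_(It k, r))
  (Y : tensor R N)
  (Ysym : partition_symmetric sigma It Y) :
  forall (k : 'I_K) (u v : 'I_N) (hu : sigma u = k) (hv : sigma v = k),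
    castmx (same_cell_dim It hu hv, erefl r)
      (matricize sigma It Y u *m kr_except sigma A u)
    = matricize sigma It Y v *m kr_except sigma A v.
Proof.
move=> k u v hu hv; apply/matrixP => a c.
have It_le l : (It l <= \max_(l' : 'I_K) It l')%N by exact: leq_bigmax.
rewrite castmxE /= !(mulmx_kr_exceptE A It_pos It_le).
rewrite (_ : cast_ord _ c = c); last exact: val_inj.
exact: sum_slice_tperm Ysym _ _ _ _ (etrans hu (esym hv)).
Qed.
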